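(* Let $G=(V,E)$ be a simple connected undirected graph with $n\ge 2$ vertices and let $S$ be the output of Algorithm Stage-One on $G$. Then $S\setminus V(G(P_S))$ is an independent set of $G$, and every vertex of $S\setminus V(G(P_S))$ has a neighbor in $V\setminus S$.
   Context: For $v\in V$, $N(v)=\{u\in V:(u,v)\in E\}$; for $U\subseteq V$, $N(U)=\{v\in V\setminus U: v \text{ has a neighbor in } U\}$. Algorithm Stage-One: set $S_0=\emptyset$ and $h=0$. While $S_h$ is not a dominating set of $G$: increase $h$ by one; for each $v\in V\setminus S_{h-1}$ its active degree is $|N(v)\setminus (S_{h-1}\cup N(S_{h-1}))|$; if the maximum active degree over $V\setminus S_{h-1}$ is positive, let $v_h$ be any vertex of $V\setminus S_{h-1}$ of maximum active degree, otherwise let $v_h$ be any vertex of $V\setminus(S_{h-1}\cup N(S_{h-1}))$; set $S_h=S_{h-1}\cup\{v_h\}$. The output is $S=S_p=\{v_1,\dots,v_p\}$. For $h\in\{1,\dots,p\}$, let $S(h)=N(v_h)\setminus(S_{h-1}\cup N(S_{h-1}))$. The set of tied pairs is $P_S=\{(v_h,v): h\in\{1,\dots,p\},\ v\in S\cap S(h)\}$. $G(P_S)$ is the subgraph of $G$ whose edges are the tied pairs and whose vertices are the endpoints of tied pairs; $V(G(P_S))$ is its vertex set. An independent set is a set of pairwise non-adjacent vertices. *)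

From mathcomp Require Import all_boot.
Set Implicit Arguments. Unset Strict Implicit. Unset Printing Implicit Defensive.

Section Graph.
Variables (T : finType) (e : rel T).

Definition simple_graph := symmetric e /\ irreflexive e.
Definition connected_graph := forall x y : T, connect e x y.

Definition nbh (v : T) : {set T} := [set u | e u v].
Definition nbhS (U : {set T}) : {set T} :=
  [set v | (v \notin U) && [exists u in U, e u v]].

Definition dominating (D : {set T}) : bool := D :|: nbhS D == setT.

Definition active_deg (Sprev : {set T}) (v : T) : nat :=
  #|nbh v :\: (Sprev :|: nbhS Sprev)|.

(* v is a legal choice of v_h given S_{h-1} = Sprev *)
Definition legal_step (Sprev : {set T}) (v : T) : Prop :=
  v \notin Sprev /\
  ( ((exists2 w, w \notin Sprev & 0 < active_deg Sprev w) /\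
     (forall w, w \notin Sprev -> active_deg Sprev w <= active_deg Sprev v))
  \/
    ((forall w, w \notin Sprev -> active_deg Sprev w = 0) /\
     v \notin Sprev :|: nbhS Sprev) ).

(* stage_one_run Sprev s : starting from current set Sprev, the algorithm
   chooses successively the vertices of s and then stops. *)
Fixpoint stage_one_run (Sprev : {set T}) (s : seq T) : Prop :=
  match s with
  | [::] => dominating Sprev
  | v :: s' => ~~ dominating Sprev /\ legal_step Sprev v /\
               stage_one_run (v |: Sprev) s'
  end.

Definition stage_one_output (s : seq T) : Prop := stage_one_run set0 s.

Definition prefix_set (s : seq T) (h : nat) : {set T} := [set x in take h s].

(* S(h+1) (0-indexed h) = N(v_{h+1}) \ (S_h ∪ N(S_h)) *)
Definition Sof (s : seq T) (h : nat) (vh : T) : {set T} :=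
  nbh vh :\: (prefix_set s h :|: nbhS (prefix_set s h)).

(* (u, v) is a tied pair: u = v_h and v ∈ S ∩ S(h) for some h *)
Definition tied (s : seq T) (u v : T) : bool :=
  [exists h : 'I_(size s), (nth u s h == u) &&
     (v \in [set x in s] :&: Sof s h u)].

(* V(G(P_S)) : endpoints of tied pairs *)
Definition tied_vertices (s : seq T) : {set T} :=
  [set x | [exists y, tied s x y || tied s y x]].

Definition independent (I : {set T}) : Prop :=
  forall x y, x \in I -> y \in I -> ~~ e x y.

End Graph.

From mathcomp Require Import all_boot.

(* If v_j has an earlier neighbour in S, then for the first such neighbour
   v_m the vertex v_j is still uncovered at step m, so (v_m, v_j) is a tied
   pair.  Hence a vertex of S outside V(G(P_S)) has no earlier neighbour in S,
   which gives independence, and it is uncovered when it is chosen.  Being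
   uncovered with a neighbour w (connectivity, n >= 2), it makes the active
   degree of w positive, so it was chosen with positive active degree: it has
   a neighbour y in S(h), and y lies outside S since otherwise (v_h, y) would
   be a tied pair. *)

Section StageOne.
Context {T : finType} {e : rel T}.

Lemma stage_one_run_spec (P : {set T}) (s : seq T) :
  stage_one_run e P s ->
  [/\ uniq s, all (fun x => x \notin P) s &
   forall i x0, i < size s -> legal_step e (P :|: prefix_set s i) (nth x0 s i)].
Proof.
elim: s P => [|v s IH] P /=; first by split.
move=> [_ [legal_v run_s]]; have [uniq_s fresh_s legal_s] := IH _ run_s.
have v_notin_P : v \notin P by case: legal_v.
split.
- rewrite uniq_s andbT; apply/negP => v_in_s.
  by move/allP: fresh_s => /(_ v v_in_s); rewrite !inE eqxx.
- rewrite v_notin_P; apply/allP => x x_in_s.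
  by move/allP: fresh_s => /(_ x x_in_s); rewrite !inE negb_or => /andP [].
- case=> [|i] x0 lt_i_s /=.
    rewrite (_ : P :|: prefix_set (v :: s) 0 = P) //.
    by apply/setP => z; rewrite !inE take0 orbF.
  rewrite (_ : P :|: prefix_set (v :: s) i.+1 = (v |: P) :|: prefix_set s i).
    exact: legal_s.
  by apply/setP => z; rewrite !inE orbA [(z == v) || _]orbC.
Qed.

Lemma stage_one_output_spec (s : seq T) :
  stage_one_output e s ->
  uniq s /\ forall i x0, i < size s -> legal_step e (prefix_set s i) (nth x0 s i).
Proof.
case/stage_one_run_spec=> uniq_s _ legal_s; split=> // i x0.
by rewrite -[prefix_set _ _]set0U; apply: legal_s.
Qed.

Lemma legal_step_active_deg_gt0 {P : {set T}} {v w : T} :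
  legal_step e P v -> w \notin P -> 0 < active_deg e P w -> 0 < active_deg e P v.
Proof.
case=> _ [[_ max_v] | [deg0 _]] w_notin_P deg_w; last by rewrite deg0 in deg_w.
exact: leq_trans (max_v w _).
Qed.

Lemma active_deg_gt0 {P : {set T}} {x w : T} :
  e x w -> x \notin P :|: nbhS e P -> 0 < active_deg e P w.
Proof. by move=> exw x_unc; apply/card_gt0P; exists x; rewrite in_setD x_unc inE. Qed.

Hypothesis e_sym : symmetric e.

Lemma tied_of_earlier_nbr {s : seq T} {x y : T} :
  uniq s -> x \in s -> index y s < index x s -> e y x -> x \in tied_vertices e s.
Proof.
move=> uniq_s x_in_s lt_yx eyx.
have y_in_s : y \in s by rewrite -index_mem (ltn_trans lt_yx) ?index_mem.
have ex_nbr : exists k, (k < index x s) && e (nth x s k) x.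
  by exists (index y s); rewrite lt_yx nth_index.
case: (ex_minnP ex_nbr) => m /andP [lt_mx emx] min_m.
have lt_m_s : m < size s by rewrite (ltn_trans lt_mx) ?index_mem.
have x_notin_pre : x \notin take m s.
  by apply/negP => /index_ltn /(ltn_trans lt_mx); rewrite ltnn.
rewrite inE; apply/existsP; exists (nth x s m); apply/orP; right.
apply/existsP; exists (Ordinal lt_m_s).
rewrite /= (set_nth_default x) // eqxx /= !inE x_in_s e_sym emx /=.
rewrite andbT negb_or x_notin_pre /=; apply/existsP => -[u /andP [u_pre eux]].
rewrite inE in u_pre; have u_in_s := mem_take u_pre.
have := min_m (index u s); rewrite nth_index // eux andbT.
rewrite (ltn_trans (index_ltn u_pre) lt_mx) => /(_ isT).
by rewrite leqNgt index_ltn.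
Qed.

Lemma nontied_independent (s : seq T) :
  irreflexive e -> uniq s -> independent e ([set x in s] :\: tied_vertices e s).
Proof.
move=> e_irr uniq_s x y /setDP [+ x_nt] /setDP [+ y_nt].
rewrite !inE => x_in_s y_in_s.
apply/negP => exy.
case: (ltngtP (index x s) (index y s)) => [lt_xy | lt_yx | eq_xy].
- by rewrite (tied_of_earlier_nbr uniq_s y_in_s lt_xy exy) in y_nt.
- by rewrite e_sym in exy; rewrite (tied_of_earlier_nbr uniq_s x_in_s lt_yx exy) in x_nt.
- by move: exy; rewrite -(nth_index x x_in_s) eq_xy nth_index // e_irr.
Qed.

Lemma nontied_uncovered (s : seq T) (x : T) :
  uniq s -> x \in s -> x \notin tied_vertices e s ->
  x \notin prefix_set s (index x s) :|: nbhS e (prefix_set s (index x s)).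
Proof.
move=> uniq_s x_in_s x_nt.
have x_notin_pre : x \notin prefix_set s (index x s).
  by rewrite inE; apply/negP => /index_ltn; rewrite ltnn.
rewrite in_setU negb_or x_notin_pre inE x_notin_pre /=.
apply/existsP => -[u /andP [u_pre eux]]; rewrite inE in u_pre.
by rewrite (tied_of_earlier_nbr uniq_s x_in_s (index_ltn u_pre) eux) in x_nt.
Qed.

Lemma connected_has_nbr (x : T) : connected_graph e -> 1 < #|T| -> exists w, e x w.
Proof.
move=> conn /card_gt1P [a [b [_ _ neq_ab]]].
have [z neq_zx] : exists z, z != x.
  by case: (eqVneq a x) => [<-|]; [exists b; rewrite eq_sym | exists a].
move/connectP: (conn x z) => [[|w p] /= path_xz last_z].
  by rewrite last_z eqxx in neq_zx.
by case/andP: path_xz; exists w.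
Qed.

Lemma nontied_has_outer_nbr {s : seq T} {x : T} :
  connected_graph e -> 1 < #|T| ->
  uniq s -> (forall i x0, i < size s -> legal_step e (prefix_set s i) (nth x0 s i)) ->
  x \in s -> x \notin tied_vertices e s -> exists2 y, y \notin s & e x y.
Proof.
move=> conn card_T uniq_s legal_s x_in_s x_nt.
set Sp := prefix_set s (index x s).
have x_unc : x \notin Sp :|: nbhS e Sp by apply: nontied_uncovered.
have [w exw] := connected_has_nbr x conn card_T.
have w_notin_Sp : w \notin Sp.
  move: x_unc; rewrite in_setU negb_or => /andP [x_notin_Sp]; apply: contra => w_in_Sp.
  by rewrite inE x_notin_Sp; apply/existsP; exists w; rewrite w_in_Sp e_sym.
have lt_x_s : index x s < size s by rewrite index_mem.
have legal_x := legal_s _ x lt_x_s; rewrite nth_index // in legal_x.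
have /card_gt0P [y y_Sx] :=
  legal_step_active_deg_gt0 legal_x w_notin_Sp (active_deg_gt0 exw x_unc).
exists y; last by move: y_Sx; rewrite !inE e_sym => /andP [].
apply: contra x_nt => y_in_s; rewrite inE; apply/existsP; exists y; apply/orP; left.
apply/existsP; exists (Ordinal lt_x_s); rewrite /= nth_index // eqxx /=.
by rewrite in_setI inE y_in_s.
Qed.

End StageOne.

Theorem mainTheorem5 (T : finType) (e : rel T) (s : seq T) :
  simple_graph e -> connected_graph e -> 1 < #|T| ->
  stage_one_output e s ->
  let S := [set x in s] in
  independent e (S :\: tied_vertices e s) /\
  (forall x, x \in S :\: tied_vertices e s ->
     exists2 y, y \in ~: S & e x y).
Proof.
move=> [e_sym e_irr] conn card_T /stage_one_output_spec [uniq_s legal_s] S.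
split; first exact: nontied_independent.
move=> x /setDP [+ x_nt]; rewrite inE => x_in_s.
have [y y_out exy] :=
  nontied_has_outer_nbr e_sym conn card_T uniq_s legal_s x_in_s x_nt.
by exists y; rewrite // !inE.
Qed.
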